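(* For complex parameters $\nu,\mu$ such that all terms are defined, and complex $x$, $$e^{-x}\sum_{n\ge0}\frac{(-x)^n}{(\mu)_n}\left\{L_n^{(\nu)}(x)-\frac{x}{\nu+2}L_n^{(\nu+1)}(x)\right\}={}_3F_3\!\left[\begin{matrix}\nu+3,\ \frac{\mu}{2}+\frac{\nu}{2}+1,\ \frac{\mu}{2}+\frac{\nu}{2}+\frac12\\ \nu+2,\ \mu,\ \mu+\nu+1\end{matrix};-4x\right]+\frac{2x}{\mu}\,{}_3F_3\!\left[\begin{matrix}\nu+3,\ \frac{\mu}{2}+\frac{\nu}{2}+1,\ \frac{\mu}{2}+\frac{\nu}{2}+\frac32\\ \nu+2,\ \mu+1,\ \mu+\nu+2\end{matrix};-4x\right]$$ $$+\frac{x^2}{\mu(\mu+1)}\,{}_3F_3\!\left[\begin{matrix}\nu+3,\ \frac{\mu}{2}+\frac{\nu}{2}+2,\ \frac{\mu}{2}+\frac{\nu}{2}+\frac32\\ \nu+2,\ \mu+2,\ \mu+\nu+3\end{matrix};-4x\right].$$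
   Context: $(a)_k=a(a+1)\cdots(a+k-1)$ is the Pochhammer symbol; ${}_3F_3\!\left[\begin{matrix}a_1,a_2,a_3\\ b_1,b_2,b_3\end{matrix};z\right]=\sum_{k\ge0}\frac{(a_1)_k(a_2)_k(a_3)_k}{(b_1)_k(b_2)_k(b_3)_k}\frac{z^k}{k!}$. $L_n^{(\alpha)}(x)=\frac{(\alpha+1)_n}{n!}\sum_{k=0}^n\frac{(-n)_k}{(\alpha+1)_k}\frac{x^k}{k!}$ is the generalized Laguerre polynomial. *)

From Stdlib Require Import Reals Factorial.
From Coquelicot Require Export Coquelicot.
Open Scope C_scope.

Fixpoint cpow (z : C) (n : nat) : C :=
  match n with O => 1 | S n => cpow z n * z end.

Fixpoint poch (a : C) (k : nat) : C :=
  match k with O => 1 | S k => poch a k * (a + RtoC (INR k)) end.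

Definition cfact (k : nat) : C := RtoC (INR (fact k)).

Fixpoint csum (f : nat -> C) (n : nat) : C :=
  match n with O => f O | S n => csum f n + f (S n) end.

Definition laguerre (n : nat) (alpha x : C) : C :=
  poch (alpha + 1) n / cfact n *
  csum (fun k => poch (- RtoC (INR n)) k / poch (alpha + 1) k
                 * cpow x k / cfact k) n.

Definition cexp (z : C) : C :=
  (exp (Re z) * cos (Im z), exp (Re z) * sin (Im z))%R.

(* k-th term of the 3F3 series; the value of 3F3 is the sum of these terms *)
Definition F33_term (a1 a2 a3 b1 b2 b3 z : C) (k : nat) : C :=
  poch a1 k * poch a2 k * poch a3 k / (poch b1 k * poch b2 k * poch b3 k)
  * cpow z k / cfact k.

(* Expanding each Laguerre polynomial turns the left-hand series into a triangular double series
   in x; it converges absolutely because |(mu)_n| grows like n!, so it may be summed along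
   antidiagonals. Multiplying by the exponential series and applying the Chu--Vandermonde identity
   twice gives e^{-x} sum_n (-x)^n/(mu)_n L_n^(nu)(x) = sum_m (-1)^m (mu+nu+m)_m/((mu)_m m!) x^m.
   On the right, the duplication formula (a)_{2k} = 4^k (a/2)_k ((a+1)/2)_k turns each 3F3 at -4x
   into a series of the same kind, and the theorem reduces to comparing coefficients of x^m, an
   identity between rational functions of mu, nu and m. *)

From Stdlib Require Import Reals Lra Lia Factorial.
From Coquelicot Require Import Coquelicot.
Open Scope C_scope.

Lemma RtoC_neq_0 (r : R) : r <> 0%R -> RtoC r <> 0.
Proof. intros H E. apply H. exact (f_equal fst E). Qed.

Lemma INR_S_C k : RtoC (INR (S k)) = RtoC (INR k) + 1.
Proof. rewrite S_INR, RtoC_plus. reflexivity. Qed.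

Lemma INR_S_C_neq_0 k : RtoC (INR k) + 1 <> 0.
Proof. rewrite <- INR_S_C. apply RtoC_neq_0, not_0_INR. lia. Qed.

Lemma minus_INR_C m n : (n <= m)%nat -> RtoC (INR (m - n)) = RtoC (INR m) - RtoC (INR n).
Proof.
  intros H. rewrite minus_INR by exact H. unfold Rminus. rewrite RtoC_plus, RtoC_opp. reflexivity.
Qed.

Lemma C_eq (a b : C) : Re a = Re b -> Im a = Im b -> a = b.
Proof. destruct a, b; simpl; intros; subst; reflexivity. Qed.

Lemma sum_n_csum (a : nat -> C) n : sum_n a n = csum a n.
Proof. induction n; simpl. - now rewrite sum_O. - now rewrite sum_Sn, IHn. Qed.

Lemma csum_ext_le (f g : nat -> C) n :
  (forall k, (k <= n)%nat -> f k = g k) -> csum f n = csum g n.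
Proof.
  induction n; intros H; simpl.
  - apply H; lia.
  - rewrite IHn, (H (S n)) by (try intros; try apply H; lia). reflexivity.
Qed.

Lemma csum_ext (f g : nat -> C) n : (forall k, f k = g k) -> csum f n = csum g n.
Proof. intros H. apply csum_ext_le. auto. Qed.

Lemma csum_plus (f g : nat -> C) n : csum (fun k => f k + g k) n = csum f n + csum g n.
Proof. induction n; simpl; auto. rewrite IHn. ring. Qed.

Lemma csum_minus (f g : nat -> C) n : csum (fun k => f k - g k) n = csum f n - csum g n.
Proof. induction n; simpl; auto. rewrite IHn. ring. Qed.

Lemma csum_scal (c : C) (f : nat -> C) n : csum (fun k => c * f k) n = c * csum f n.
Proof. induction n; simpl; auto. rewrite IHn. ring. Qed.

Lemma csum_Sl (f : nat -> C) n : csum f (S n) = f O + csum (fun k => f (S k)) n.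
Proof. induction n; cbn [csum] in *; [ring | rewrite IHn; ring]. Qed.

Lemma csum_trunc (f : nat -> C) n p : (n <= p)%nat ->
  (forall k, (n < k)%nat -> (k <= p)%nat -> f k = 0) -> csum f p = csum f n.
Proof.
  induction p; intros Hnp H.
  - now replace n with O by lia.
  - destruct (Nat.eq_dec n (S p)) as [-> | Hn]; [reflexivity |].
    simpl. rewrite IHp, (H (S p)) by (lia || (intros; apply H; lia)). ring.
Qed.

Lemma csum_rev (f : nat -> C) m : csum f m = csum (fun j => f (m - j)%nat) m.
Proof.
  revert f; induction m; intros f; [reflexivity |].
  rewrite csum_Sl, IHm. cbn [csum]. rewrite Nat.sub_diag, Cplus_comm.
  f_equal. apply csum_ext_le. intros k Hk. f_equal. lia.
Qed.

Lemma csum_antidiag (g : nat -> nat -> C) M :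
  csum (fun m => csum (fun n => g n (m - n)%nat) m) M =
  csum (fun n => csum (g n) (M - n)%nat) M.
Proof.
  induction M; [reflexivity |].
  cbn [csum]. rewrite IHM, Nat.sub_diag.
  rewrite (csum_ext_le (fun n => csum (g n) (S M - n))
             (fun n => csum (g n) (M - n) + g n (S M - n)%nat)).
  - rewrite csum_plus. simpl. ring.
  - intros k Hk. replace (S M - k)%nat with (S (M - k)) by lia. reflexivity.
Qed.

Lemma csum_RtoC (f : nat -> R) n : csum (fun k => RtoC (f k)) n = RtoC (sum_f_R0 f n).
Proof. induction n; simpl; auto. rewrite IHn, RtoC_plus. reflexivity. Qed.

Lemma Cmod_csum_le (f : nat -> C) n : Cmod (csum f n) <= sum_f_R0 (fun k => Cmod (f k)) n.
Proof. induction n; simpl; [lra |]. eapply Rle_trans; [apply Cmod_triangle | lra]. Qed.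

Lemma cpow_Cpow z n : cpow z n = Cpow z n.
Proof. induction n; simpl; auto. rewrite IHn. ring. Qed.

Lemma cpow_add z a b : cpow z (a + b) = cpow z a * cpow z b.
Proof. rewrite !cpow_Cpow. apply Cpow_add_r. Qed.

Lemma cpow_mult a b n : cpow (a * b) n = cpow a n * cpow b n.
Proof. rewrite !cpow_Cpow. apply Cpow_mult_l. Qed.

Lemma cpow_neq_0 (z : C) n : z <> 0 -> cpow z n <> 0.
Proof. rewrite cpow_Cpow. apply Cpow_nz. Qed.

Lemma Cmod_cpow z n : Cmod (cpow z n) = (Cmod z ^ n)%R.
Proof. rewrite cpow_Cpow. apply Cmod_pow. Qed.

Lemma cpow_RtoC (a : R) n : cpow (RtoC a) n = RtoC (a ^ n).
Proof. rewrite cpow_Cpow. symmetry. apply RtoC_pow. Qed.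

Lemma cpow_m1_sqr n : cpow (-1) n * cpow (-1) n = 1.
Proof.
  rewrite <- cpow_mult. replace (-1 * -1) with (RtoC 1) by ring.
  rewrite cpow_Cpow. apply Cpow_1_l.
Qed.

Lemma cpow_m1_neq_0 n : cpow (-1) n <> 0.
Proof. apply cpow_neq_0. apply RtoC_neq_0. lra. Qed.

Lemma cfact_S k : cfact (S k) = cfact k * (RtoC (INR k) + 1).
Proof. unfold cfact. rewrite fact_simpl, mult_INR, <- INR_S_C, RtoC_mult. ring. Qed.

Lemma INR_fact_pos k : (0 < INR (fact k))%R.
Proof. apply lt_0_INR, lt_O_fact. Qed.

Lemma cfact_neq_0 k : cfact k <> 0.
Proof. apply RtoC_neq_0. apply Rgt_not_eq, INR_fact_pos. Qed.

Lemma poch_Sl a k : poch a (S k) = a * poch (a + 1) k.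
Proof.
  induction k; [simpl; ring |].
  change (poch a (S (S k))) with (poch a (S k) * (a + RtoC (INR (S k)))).
  rewrite IHk, INR_S_C. cbn [poch]. ring.
Qed.

Lemma poch_add a k r : poch a (k + r) = poch a k * poch (a + RtoC (INR k)) r.
Proof.
  induction r.
  - rewrite Nat.add_0_r. simpl. ring.
  - rewrite Nat.add_succ_r. cbn [poch]. rewrite IHr, plus_INR, RtoC_plus. ring.
Qed.

Lemma poch_1 n : poch 1 n = cfact n.
Proof. induction n; [reflexivity |]. cbn [poch]. rewrite IHn, cfact_S. ring. Qed.

Lemma poch_neg_nat_eq_0 n k : (n < k)%nat -> poch (- RtoC (INR n)) k = 0.
Proof.
  intros H. replace k with (S n + (k - S n))%nat by lia.
  rewrite poch_add. simpl. ring.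
Qed.

Definition not_nonpos_int (c : C) : Prop := forall i : nat, c + RtoC (INR i) <> 0.

Lemma poch_neq_0 a n : not_nonpos_int a -> poch a n <> 0.
Proof.
  intros H. induction n; simpl.
  - apply RtoC_neq_0. lra.
  - apply Cmult_neq_0; auto.
Qed.

Lemma not_nonpos_int_S (c : C) : not_nonpos_int c -> not_nonpos_int (c + 1).
Proof.
  intros H i. replace (c + 1 + RtoC (INR i)) with (c + RtoC (INR (S i))) by (rewrite INR_S_C; ring).
  apply H.
Qed.

Lemma not_nonpos_int_SS (c : C) : not_nonpos_int c -> not_nonpos_int (c + 2).
Proof.
  intros H. replace (c + 2) with (c + 1 + 1) by ring. now apply not_nonpos_int_S, not_nonpos_int_S.
Qed.

Lemma not_nonpos_int_neq_0 (c : C) : not_nonpos_int c -> c <> 0.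
Proof. intros H. replace c with (c + RtoC (INR 0)) by (simpl; ring). apply H. Qed.

Lemma poch_reflect a n : poch (- a - RtoC (INR n) + 1) n = cpow (-1) n * poch a n.
Proof.
  revert a; induction n; intros a; [simpl; ring |].
  rewrite poch_Sl. replace (- a - RtoC (INR (S n)) + 1 + 1) with (- a - RtoC (INR n) + 1)
    by (rewrite INR_S_C; ring).
  rewrite IHn. cbn [cpow poch]. rewrite INR_S_C. ring.
Qed.

Lemma poch_neg_nat t k : (k <= t)%nat ->
  poch (- RtoC (INR t)) k * cfact (t - k) = cpow (-1) k * cfact t.
Proof.
  intros H.
  replace (- RtoC (INR t)) with (- (RtoC (INR (t - k)) + 1) - RtoC (INR k) + 1)
    by (rewrite minus_INR_C by exact H; ring).
  rewrite poch_reflect, <- !poch_1.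
  replace (poch 1 t) with (poch 1 (t - k + k)) by (f_equal; lia).
  rewrite poch_add. replace (1 + RtoC (INR (t - k))) with (RtoC (INR (t - k)) + 1) by ring.
  ring.
Qed.

(** * The Chu--Vandermonde identity *)

Definition vdm_term (t : nat) (b c : C) (k : nat) : C :=
  poch (- RtoC (INR t)) k * poch b k / (poch c k * cfact k).

Section ChuVandermonde.

Variables (b c : C).
Hypothesis Hc : not_nonpos_int c.

Lemma vdm_term_S t k :
  vdm_term (S t) b c (S k) = vdm_term t b c (S k) - b / c * vdm_term t (b + 1) (c + 1) k.
Proof.
  unfold vdm_term.
  pose proof (not_nonpos_int_neq_0 c Hc). pose proof (poch_neq_0 _ k (not_nonpos_int_S c Hc)).
  pose proof (cfact_neq_0 k). pose proof (INR_S_C_neq_0 k).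
  replace (poch (- RtoC (INR t)) (S k))
    with (poch (- RtoC (INR t)) k * (- RtoC (INR t) + RtoC (INR k))) by reflexivity.
  rewrite !poch_Sl, cfact_S.
  replace (- RtoC (INR (S t)) + 1) with (- RtoC (INR t)) by (rewrite INR_S_C; ring).
  rewrite INR_S_C. field. auto.
Qed.

Lemma vdm_sum_S t :
  csum (vdm_term (S t) b c) (S t) =
  csum (vdm_term t b c) t - b / c * csum (vdm_term t (b + 1) (c + 1)) t.
Proof.
  rewrite csum_Sl, (csum_ext _ _ _ (vdm_term_S t)), csum_minus, csum_scal.
  replace (csum (vdm_term t b c) t) with (csum (vdm_term t b c) (S t)).
  - rewrite csum_Sl. change (vdm_term (S t) b c 0) with (vdm_term t b c 0). ring.
  - apply csum_trunc; [lia |]. intros k Hk _.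
    unfold vdm_term. rewrite poch_neg_nat_eq_0 by exact Hk. unfold Cdiv. ring.
Qed.

End ChuVandermonde.

Lemma chu_vandermonde t b c : not_nonpos_int c ->
  csum (vdm_term t b c) t = poch (c - b) t / poch c t.
Proof.
  revert b c; induction t; intros b c Hc.
  - unfold vdm_term, cfact. simpl. field.
  - pose proof (not_nonpos_int_S c Hc) as Hc1.
    rewrite vdm_sum_S, !IHt by assumption.
    replace (c + 1 - (b + 1)) with (c - b) by ring.
    pose proof (not_nonpos_int_neq_0 c Hc). pose proof (poch_neq_0 c t Hc). pose proof (Hc t).
    assert (Ec1 : poch (c + 1) t = poch c t * (c + RtoC (INR t)) / c).
    { change (poch c t * (c + RtoC (INR t))) with (poch c (S t)). rewrite poch_Sl. field. auto. }
    change (poch (c - b) (S t)) with (poch (c - b) t * (c - b + RtoC (INR t))).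
    change (poch c (S t)) with (poch c t * (c + RtoC (INR t))).
    rewrite Ec1. field. auto.
Qed.

(** * Coefficients of the exponential times the Laguerre series *)

Definition lag_coef (nu : C) (n k : nat) : C :=
  poch (nu + 1) n / cfact n * (poch (- RtoC (INR n)) k / poch (nu + 1) k / cfact k).

(* The coefficient of [x^(n+k)] in [(-x)^n / (mu)_n * L_n^(nu)(x)]. *)
Definition lag_series_coef (mu nu : C) (n k : nat) : C :=
  cpow (-1) n / poch mu n * lag_coef nu n k.

Definition exp_lag_series_coef (mu nu : C) (m : nat) : C :=
  cpow (-1) m * poch (mu + nu + RtoC (INR m)) m / (poch mu m * cfact m).

Lemma cpow_m1_sub m n : (n <= m)%nat -> cpow (-1) m = cpow (-1) n * cpow (-1) (m - n).
Proof. intros H. rewrite <- cpow_add. f_equal. lia. Qed.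

(* Kummer's transformation e^{-x} L_n^nu(x) = sum_t (-1)^t (nu+1)_{n+t}/((nu+1)_t n! t!) x^t,
   coefficientwise; it is one instance of Chu--Vandermonde. *)
Lemma exp_lag_coef nu n t : not_nonpos_int (nu + 1) ->
  csum (fun k => cpow (-1) (t - k) / cfact (t - k) * lag_coef nu n k) t =
  cpow (-1) t * poch (nu + 1) (n + t) / (poch (nu + 1) t * cfact n * cfact t).
Proof.
  intros Hnu.
  rewrite (csum_ext_le _ (fun k => cpow (-1) t / cfact t * (poch (nu + 1) n / cfact n) *
                                   vdm_term t (- RtoC (INR n)) (nu + 1) k)).
  - rewrite csum_scal, chu_vandermonde, poch_add by exact Hnu.
    replace (nu + 1 - - RtoC (INR n)) with (nu + 1 + RtoC (INR n)) by ring.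
    pose proof (poch_neq_0 _ t Hnu). pose proof (cfact_neq_0 n). pose proof (cfact_neq_0 t).
    field. auto.
  - intros k Hk. unfold lag_coef, vdm_term.
    pose proof (poch_neq_0 _ k Hnu). pose proof (cfact_neq_0 n). pose proof (cfact_neq_0 t).
    pose proof (cfact_neq_0 k). pose proof (cfact_neq_0 (t - k)). pose proof (cpow_m1_neq_0 k).
    replace (poch (- RtoC (INR t)) k) with (cpow (-1) k * cfact t / cfact (t - k))
      by (rewrite <- poch_neg_nat by exact Hk; field; auto).
    rewrite (cpow_m1_sub t k Hk).
    transitivity (cpow (-1) k * cpow (-1) k *
                  (cpow (-1) (t - k) / cfact (t - k) * lag_coef nu n k)).
    + rewrite cpow_m1_sqr. unfold lag_coef. ring.
    + unfold lag_coef. field. repeat split; auto.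
Qed.

Lemma poch_inv_convolution mu nu m :
  not_nonpos_int mu -> not_nonpos_int (nu + 1) ->
  csum (fun n => / (poch mu n * poch (nu + 1) (m - n) * cfact n * cfact (m - n))) m =
  poch (mu + nu + RtoC (INR m)) m / (poch mu m * poch (nu + 1) m * cfact m).
Proof.
  intros Hmu Hnu.
  rewrite (csum_ext_le _ (fun n => / (cfact m * poch (nu + 1) m) *
                                   vdm_term m (- nu - RtoC (INR m)) mu n)).
  - rewrite csum_scal, chu_vandermonde by exact Hmu.
    replace (mu - (- nu - RtoC (INR m))) with (mu + nu + RtoC (INR m)) by ring.
    pose proof (poch_neq_0 mu m Hmu). pose proof (poch_neq_0 _ m Hnu). pose proof (cfact_neq_0 m).
    field. auto.
  - intros n Hn. unfold vdm_term.
    assert (Hsplit : poch (nu + 1) m =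
                     poch (nu + 1) (m - n) * poch (nu + 1 + RtoC (INR (m - n))) n).
    { rewrite <- poch_add. f_equal. lia. }
    assert (Hrefl := poch_reflect (nu + 1 + RtoC (INR (m - n))) n).
    replace (- (nu + 1 + RtoC (INR (m - n))) - RtoC (INR n) + 1) with (- nu - RtoC (INR m)) in Hrefl
      by (rewrite minus_INR_C by exact Hn; ring).
    rewrite Hrefl, Hsplit.
    replace (poch (- RtoC (INR m)) n) with (cpow (-1) n * cfact m / cfact (m - n))
      by (rewrite <- poch_neg_nat by exact Hn; field; apply cfact_neq_0).
    pose proof (poch_neq_0 mu n Hmu). pose proof (poch_neq_0 _ (m - n) Hnu).
    assert (poch (nu + 1 + RtoC (INR (m - n))) n <> 0).
    { intros E. apply (poch_neq_0 _ m Hnu). rewrite Hsplit, E. ring. }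
    pose proof (cfact_neq_0 m). pose proof (cfact_neq_0 n). pose proof (cfact_neq_0 (m - n)).
    transitivity (cpow (-1) n * cpow (-1) n *
                  / (poch mu n * poch (nu + 1) (m - n) * cfact n * cfact (m - n))).
    + rewrite cpow_m1_sqr. ring.
    + field. repeat split; auto.
Qed.

Lemma exp_lag_series_coefE mu nu m :
  not_nonpos_int mu -> not_nonpos_int (nu + 1) ->
  csum (fun j => cpow (-1) j / cfact j *
                 csum (fun n => lag_series_coef mu nu n (m - j - n)) (m - j)) m =
  exp_lag_series_coef mu nu m.
Proof.
  intros Hmu Hnu.
  rewrite csum_rev.
  set (g n k := cpow (-1) (m - n - k) / cfact (m - n - k) * lag_series_coef mu nu n k).
  rewrite (csum_ext_le _ (fun i => csum (fun n => g n (i - n)%nat) i)).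
  2:{ intros i Hi. replace (m - (m - i))%nat with i by lia. rewrite <- csum_scal.
      apply csum_ext_le. intros n Hn. unfold g. do 3 f_equal; lia. }
  rewrite csum_antidiag. unfold g.
  rewrite (csum_ext_le _ (fun n => cpow (-1) m * poch (nu + 1) m *
             / (poch mu n * poch (nu + 1) (m - n) * cfact n * cfact (m - n)))).
  - rewrite csum_scal, poch_inv_convolution by assumption. unfold exp_lag_series_coef.
    pose proof (poch_neq_0 mu m Hmu). pose proof (poch_neq_0 _ m Hnu). pose proof (cfact_neq_0 m).
    field. auto.
  - intros n Hn.
    rewrite (csum_ext _ (fun k => cpow (-1) n / poch mu n *
               (cpow (-1) (m - n - k) / cfact (m - n - k) * lag_coef nu n k)))
      by (intros; unfold lag_series_coef; ring).
    rewrite csum_scal, exp_lag_coef, (cpow_m1_sub m n Hn) by exact Hnu.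
    replace (n + (m - n))%nat with m by lia.
    pose proof (poch_neq_0 mu n Hmu). pose proof (poch_neq_0 _ (m - n) Hnu).
    pose proof (cfact_neq_0 n). pose proof (cfact_neq_0 (m - n)).
    field. repeat split; auto.
Qed.

(** * Complex series and the exponential *)

Lemma Re_sum_n (a : nat -> C) n : Re (sum_n a n) = sum_n (fun k => Re (a k)) n.
Proof. induction n; [now rewrite !sum_O | now rewrite !sum_Sn, <- IHn]. Qed.

Lemma Im_sum_n (a : nat -> C) n : Im (sum_n a n) = sum_n (fun k => Im (a k)) n.
Proof. induction n; [now rewrite !sum_O | now rewrite !sum_Sn, <- IHn]. Qed.

Lemma Re_csum (f : nat -> C) n : Re (csum f n) = sum_f_R0 (fun k => Re (f k)) n.
Proof. induction n; simpl; auto. now rewrite <- IHn. Qed.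

Lemma Im_csum (f : nat -> C) n : Im (csum f n) = sum_f_R0 (fun k => Im (f k)) n.
Proof. induction n; simpl; auto. now rewrite <- IHn. Qed.

Lemma is_series_C_iff (a : nat -> C) (l : C) :
  is_series a l <->
  is_series (fun n => Re (a n)) (Re l) /\ is_series (fun n => Im (a n)) (Im l).
Proof.
  unfold is_series. split.
  - intros H. pose proof (proj1 (filterlim_locally _ _) H) as Hl.
    split; apply filterlim_locally; intros eps; destruct (Hl eps) as [N HN]; exists N;
      intros n Hn; destruct (HN n Hn) as [H1 H2].
    + rewrite <- Re_sum_n. exact H1.
    + rewrite <- Im_sum_n. exact H2.
  - intros [H1 H2]. apply filterlim_locally. intros eps.
    destruct (proj1 (filterlim_locally _ _) H1 eps) as [N1 HN1].
    destruct (proj1 (filterlim_locally _ _) H2 eps) as [N2 HN2].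
    exists (max N1 N2). intros n Hn. split.
    + change (ball (Re l) eps (Re (sum_n a n))). rewrite Re_sum_n. apply HN1. lia.
    + change (ball (Im l) eps (Im (sum_n a n))). rewrite Im_sum_n. apply HN2. lia.
Qed.

Lemma is_series_C_unique (a : nat -> C) l l' : is_series a l -> is_series a l' -> l = l'.
Proof. apply filterlim_locally_unique. Qed.

Lemma is_series_0_R : is_series (fun _ : nat => 0%R) 0%R.
Proof.
  apply (filterlim_ext (fun _ => 0%R)); [| apply filterlim_const].
  intros n. induction n; [now rewrite sum_O | rewrite sum_Sn, <- IHn; unfold plus; simpl; ring].
Qed.

Lemma is_series_RtoC (f : nat -> R) l : is_series f l -> is_series (fun n => RtoC (f n)) (RtoC l).
Proof. intros H. apply is_series_C_iff. split; [exact H | apply is_series_0_R]. Qed.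

Lemma ex_series_Cmod_Re (a : nat -> C) :
  ex_series (fun n => Cmod (a n)) -> ex_series (fun n => Rabs (Re (a n))).
Proof.
  apply (@ex_series_le R_AbsRing R_CompleteNormedModule). intros n.
  unfold norm; simpl. rewrite Rabs_Rabsolu. apply re_le_Cmod.
Qed.

Lemma ex_series_Cmod_Im (a : nat -> C) :
  ex_series (fun n => Cmod (a n)) -> ex_series (fun n => Rabs (Im (a n))).
Proof.
  apply (@ex_series_le R_AbsRing R_CompleteNormedModule). intros n.
  unfold norm; simpl. rewrite Rabs_Rabsolu. eapply Rle_trans; [apply Rmax_r | apply Rmax_Cmod].
Qed.

Lemma is_series_C_mult (a b : nat -> C) la lb : is_series a la -> is_series b lb ->
  ex_series (fun n => Cmod (a n)) -> ex_series (fun n => Cmod (b n)) ->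
  is_series (fun n => csum (fun k => a k * b (n - k)%nat) n) (la * lb).
Proof.
  intros Ha Hb Ea Eb.
  apply is_series_C_iff in Ha as [Ha1 Ha2]. apply is_series_C_iff in Hb as [Hb1 Hb2].
  apply ex_series_Cmod_Re in Ea as Ea1. apply ex_series_Cmod_Im in Ea as Ea2.
  apply ex_series_Cmod_Re in Eb as Eb1. apply ex_series_Cmod_Im in Eb as Eb2.
  apply is_series_C_iff. split.
  - eapply is_series_ext; [| apply (is_series_minus _ _ _ _ (is_series_mult _ _ _ _ Ha1 Hb1 Ea1 Eb1)
                                                         (is_series_mult _ _ _ _ Ha2 Hb2 Ea2 Eb2))].
    intros n. rewrite Re_csum. change (plus ?u (opp ?v)) with (u - v)%R. rewrite <- minus_sum.
    reflexivity.
  - eapply is_series_ext; [| apply (is_series_plus _ _ _ _ (is_series_mult _ _ _ _ Ha1 Hb2 Ea1 Eb2)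
                                                        (is_series_mult _ _ _ _ Ha2 Hb1 Ea2 Eb1))].
    intros n. rewrite Im_csum. change (plus ?u ?v) with (u + v)%R. rewrite <- plus_sum.
    apply sum_eq. intros k _.
    destruct (a k), (b (n - k)%nat). simpl. ring.
Qed.

Definition exp_term (z : C) (n : nat) : C := cpow z n / cfact n.

Lemma exp_series_R (r : R) : is_series (fun n => (r ^ n / INR (fact n))%R) (exp r).
Proof.
  eapply is_series_ext; [| apply (is_exp_Reals r)]. intros n. simpl. now rewrite pow_n_pow.
Qed.

Lemma Cmod_exp_term (z : C) n : Cmod (exp_term z n) = (Cmod z ^ n / INR (fact n))%R.
Proof.
  unfold exp_term. rewrite Cmod_div by apply cfact_neq_0.
  rewrite Cmod_cpow. unfold cfact. rewrite Cmod_R, Rabs_right; [reflexivity |].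
  apply Rle_ge, pos_INR.
Qed.

Lemma ex_series_Cmod_exp_term (z : C) : ex_series (fun n => Cmod (exp_term z n)).
Proof.
  exists (exp (Cmod z)). eapply is_series_ext; [| apply exp_series_R].
  intros n. now rewrite Cmod_exp_term.
Qed.

Lemma exp_term_S (z : C) n : exp_term z (S n) = exp_term z n * z / (RtoC (INR n) + 1).
Proof.
  unfold exp_term. rewrite cfact_S. cbn [cpow].
  pose proof (cfact_neq_0 n). pose proof (INR_S_C_neq_0 n). field. auto.
Qed.

Lemma exp_term_plus (u v : C) n :
  csum (fun k => exp_term u k * exp_term v (n - k)) n = exp_term (u + v) n.
Proof.
  induction n.
  - unfold exp_term, cfact. simpl. field.
  - set (b k := exp_term u k * exp_term v (S n - k)).
    pose proof (INR_S_C_neq_0 n) as Hn.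
    (* [(n+1) b_k = k b_k + (n+1-k) b_k]; the two parts are [u], resp. [v], times the sum at [n]. *)
    assert (Hu : csum (fun k => RtoC (INR k) * b k) (S n) =
                 u * csum (fun k => exp_term u k * exp_term v (n - k)) n).
    { rewrite csum_Sl, <- csum_scal. simpl (INR 0). rewrite Cmult_0_l, Cplus_0_l.
      apply csum_ext_le. intros k Hk. unfold b. replace (S n - S k)%nat with (n - k)%nat by lia.
      rewrite exp_term_S, INR_S_C. pose proof (INR_S_C_neq_0 k). field. auto. }
    assert (Hv : csum (fun k => RtoC (INR (S n - k)) * b k) (S n) =
                 v * csum (fun k => exp_term u k * exp_term v (n - k)) n).
    { cbn [csum]. rewrite Nat.sub_diag. simpl (INR 0). rewrite Cmult_0_l, Cplus_0_r, <- csum_scal.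
      apply csum_ext_le. intros k Hk. unfold b. replace (S n - k)%nat with (S (n - k)) by lia.
      rewrite exp_term_S, INR_S_C. pose proof (INR_S_C_neq_0 (n - k)). field. auto. }
    assert (Hsum : csum b (S n) * (RtoC (INR n) + 1) =
                   csum (fun k => RtoC (INR k) * b k) (S n) +
                   csum (fun k => RtoC (INR (S n - k)) * b k) (S n)).
    { rewrite <- csum_plus, Cmult_comm, <- csum_scal. apply csum_ext_le. intros k Hk.
      rewrite minus_INR_C, INR_S_C by exact Hk. ring. }
    rewrite Hu, Hv, IHn in Hsum.
    transitivity (csum b (S n) * (RtoC (INR n) + 1) / (RtoC (INR n) + 1)); [field; exact Hn |].
    rewrite Hsum, exp_term_S. field. exact Hn.
Qed.

Lemma is_series_exp_term_RtoC (a : R) : is_series (exp_term (RtoC a)) (RtoC (exp a)).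
Proof.
  eapply is_series_ext; [| apply is_series_RtoC, exp_series_R].
  intros n. unfold exp_term, cfact. rewrite cpow_RtoC, RtoC_div; [reflexivity |].
  apply Rgt_not_eq, INR_fact_pos.
Qed.

Lemma cpow_i_mult_even (b : R) i : cpow (Ci * RtoC b) (2 * i) = RtoC ((-1) ^ i * b ^ (2 * i)).
Proof.
  induction i; [simpl; f_equal; ring |].
  replace (2 * S i)%nat with (2 * i + 2)%nat by lia. rewrite cpow_add, IHi, pow_add.
  apply C_eq; simpl; ring.
Qed.

Lemma cpow_i_mult_odd (b : R) i :
  cpow (Ci * RtoC b) (2 * i + 1) = Ci * RtoC ((-1) ^ i * b ^ (2 * i + 1)).
Proof. rewrite cpow_add, cpow_i_mult_even, pow_add. apply C_eq; simpl; ring. Qed.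

Lemma sum_n_pairs (r : nat -> R) i :
  sum_n r (2 * i + 1) = sum_n (fun j => (r (2 * j)%nat + r (2 * j + 1)%nat)%R) i.
Proof.
  induction i; [rewrite sum_O; simpl; now rewrite sum_Sn, sum_O |].
  replace (2 * S i + 1)%nat with (S (S (2 * i + 1))) by lia.
  rewrite !sum_Sn, IHi. replace (S (2 * i + 1)) with (2 * S i)%nat by lia.
  replace (S (2 * S i)) with (2 * S i + 1)%nat by lia. unfold plus; simpl. ring.
Qed.

Lemma is_series_pairs_unique (r : nat -> R) L (g : nat -> R) c :
  is_series r L -> is_series g c -> (forall j, (r (2 * j)%nat + r (2 * j + 1)%nat)%R = g j) ->
  L = c.
Proof.
  intros Hr Hg Hrg.
  assert (HL : is_lim_seq (fun i => sum_n r (2 * i + 1)) L).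
  { apply (is_lim_seq_subseq (sum_n r) L (fun i => (2 * i + 1)%nat)); [| exact Hr].
    apply eventually_subseq. intros; lia. }
  assert (Hc : is_lim_seq (fun i => sum_n r (2 * i + 1)) c).
  { eapply is_lim_seq_ext; [| exact Hg]. intros i. rewrite sum_n_pairs. now apply sum_n_ext. }
  apply is_lim_seq_unique in HL, Hc. rewrite HL in Hc. now injection Hc.
Qed.

Lemma exp_term_i_mult_even (b : R) j :
  exp_term (Ci * RtoC b) (2 * j) = RtoC ((-1) ^ j / INR (fact (2 * j)) * (b * b) ^ j).
Proof.
  unfold exp_term, cfact. rewrite cpow_i_mult_even, <- RtoC_div by apply Rgt_not_eq, INR_fact_pos.
  f_equal. rewrite pow_sqr. simpl. replace (j + (j + 0))%nat with (2 * j)%nat by lia.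
  field. apply Rgt_not_eq, INR_fact_pos.
Qed.

Lemma exp_term_i_mult_odd (b : R) j :
  exp_term (Ci * RtoC b) (2 * j + 1) =
  Ci * RtoC (b * ((-1) ^ j / INR (fact (2 * j + 1)) * (b * b) ^ j)).
Proof.
  unfold exp_term, cfact. rewrite cpow_i_mult_odd.
  pose proof (INR_fact_pos (2 * j + 1)).
  transitivity (Ci * (RtoC ((-1) ^ j * b ^ (2 * j + 1)) / RtoC (INR (fact (2 * j + 1)))));
    [unfold Cdiv; ring |].
  rewrite <- RtoC_div by lra. do 2 f_equal. rewrite pow_add, pow_sqr, pow_1. field. lra.
Qed.

Lemma is_series_exp_term_i_mult (b : R) : is_series (exp_term (Ci * RtoC b)) (cos b, sin b).
Proof.
  destruct (@ex_series_le C_AbsRing C_CompleteNormedModule _ _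
             (fun n => Rle_refl _) (ex_series_Cmod_exp_term (Ci * RtoC b))) as [L HL].
  replace (cos b, sin b) with L; [exact HL |].
  apply is_series_C_iff in HL as [H1 H2].
  apply C_eq; simpl.
  - unfold cos. destruct (exist_cos (Rsqr b)) as [c Hc]. apply is_series_Reals in Hc.
    apply (is_series_pairs_unique _ _ _ _ H1 Hc). intros j.
    rewrite exp_term_i_mult_even, exp_term_i_mult_odd. simpl.
    replace (j + (j + 0))%nat with (2 * j)%nat by lia. unfold cos_n, Rsqr. ring.
  - unfold sin. destruct (exist_sin (Rsqr b)) as [c Hc]. apply is_series_Reals in Hc.
    apply (is_series_pairs_unique _ _ _ _ H2 (is_series_scal b _ _ Hc)). intros j.
    rewrite exp_term_i_mult_even, exp_term_i_mult_odd. simpl.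
    replace (j + (j + 0))%nat with (2 * j)%nat by lia.
    unfold sin_n, Rsqr, scal; simpl; unfold mult; simpl. ring.
Qed.

Lemma is_series_cexp (z : C) : is_series (exp_term z) (cexp z).
Proof.
  destruct z as [a b].
  replace (cexp (a, b)) with (RtoC (exp a) * (cos b, sin b))
    by (apply C_eq; unfold cexp; simpl; ring).
  replace ((a, b) : C) with (RtoC a + Ci * RtoC b) by (apply C_eq; simpl; ring).
  eapply is_series_ext; [intros n; apply exp_term_plus |].
  apply is_series_C_mult; [apply is_series_exp_term_RtoC | apply is_series_exp_term_i_mult |
                           apply ex_series_Cmod_exp_term | apply ex_series_Cmod_exp_term].
Qed.

(** * Summing a triangular double series along antidiagonals *)

Lemma sum_f_R0_le_mono (g : nat -> R) p n : (forall k, 0 <= g k) -> (p <= n)%nat ->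
  sum_f_R0 g p <= sum_f_R0 g n.
Proof.
  intros Hg Hp. induction n; [now replace p with O by lia |].
  destruct (Nat.eq_dec p (S n)) as [-> | Hne]; [lra |].
  simpl. specialize (Hg (S n)). specialize (IHn ltac:(lia)). lra.
Qed.

Lemma sum_f_R0_tail (A : nat -> R) N M : (N <= M)%nat ->
  sum_f_R0 (fun n => if Nat.leb n N then 0%R else A n) M = (sum_f_R0 A M - sum_f_R0 A N)%R.
Proof.
  intros H. replace M with (N + (M - N))%nat by lia. induction (M - N)%nat as [| d IHd].
  - rewrite Nat.add_0_r. induction N; simpl; [ring |].
    rewrite Nat.leb_refl. rewrite (sum_eq _ (fun n => if Nat.leb n N then 0%R else A n)).
    + rewrite IHN by lia. ring.
    + intros k Hk. destruct (Nat.leb_spec k N), (Nat.leb_spec k (S N)); reflexivity || lia.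
  - rewrite Nat.add_succ_r. cbn [sum_f_R0]. rewrite IHd.
    destruct (Nat.leb_spec (S (N + d)) N); [lia | ring].
Qed.

Section TriangularSeries.

Variables (f : nat -> nat -> C) (A : nat -> R).
Hypothesis f_upper : forall n k, (n < k)%nat -> f n k = 0.
Hypothesis row_le : forall n, sum_f_R0 (fun k => Cmod (f n k)) n <= A n.

Let rows N := csum (fun n => csum (f n) n) N.
Let antidiags M := csum (fun m => csum (fun n => f n (m - n)%nat) m) M.

(* Rows [n <= M/2] lie entirely inside the first [M] antidiagonals, so the two partial
   sums differ only by pieces of the rows [M/2 < n <= M]. *)
Lemma antidiags_sub_rows M :
  Cmod (antidiags M - rows (Nat.div2 M)) <= sum_f_R0 A M - sum_f_R0 A (Nat.div2 M).
Proof.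
  assert (HM := Nat.div2_odd M). set (N := Nat.div2 M) in *.
  assert (HNM : (2 * N <= M <= 2 * N + 1)%nat) by (destruct (Nat.odd M); simpl in HM; lia).
  unfold antidiags, rows. rewrite csum_antidiag.
  rewrite (csum_ext_le (fun n => csum (f n) n) (fun n => if Nat.leb n N then csum (f n) n else 0) N)
    by (intros k Hk; destruct (Nat.leb_spec k N); reflexivity || lia).
  rewrite <- (csum_trunc (fun n => if Nat.leb n N then csum (f n) n else 0) N M)
    by (lia || (intros k Hk _; destruct (Nat.leb_spec k N); reflexivity || lia)).
  rewrite <- csum_minus, <- sum_f_R0_tail by lia.
  eapply Rle_trans; [apply Cmod_csum_le |]. apply sum_Rle. intros n Hn.
  destruct (Nat.leb_spec n N).
  - rewrite (csum_trunc (f n) n (M - n)) by (lia || (intros; apply f_upper; lia)).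
    replace (csum (f n) n - csum (f n) n) with (RtoC 0) by ring. rewrite Cmod_0. lra.
  - replace (csum (f n) (M - n) - 0) with (csum (f n) (M - n)) by ring.
    eapply Rle_trans; [apply Cmod_csum_le |].
    eapply Rle_trans; [| apply row_le].
    apply sum_f_R0_le_mono; [intros; apply Cmod_ge_0 | lia].
Qed.

Hypothesis A_summable : ex_series A.

Lemma is_series_rows_antidiags : exists S,
  is_series (fun n => csum (f n) n) S /\
  is_series (fun m => csum (fun n => f n (m - n)%nat) m) S.
Proof.
  destruct A_summable as [SA HSA].
  destruct (@ex_series_le C_AbsRing C_CompleteNormedModule (fun n => csum (f n) n) A)
    as [S HS]; [| exists SA; exact HSA |].
  { intros n. eapply Rle_trans; [apply Cmod_csum_le | apply row_le]. }
  exists S. split; [exact HS |].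
  apply (proj2 (@filterlim_locally_ball_norm C_AbsRing nat C_NormedModule eventually _ _ S)).
  intros eps.
  assert (e4 : 0 < eps / 4) by (destruct eps; simpl; lra).
  assert (e2 : 0 < eps / 2) by (destruct eps; simpl; lra).
  destruct (proj1 (@filterlim_locally_ball_norm R_AbsRing nat R_NormedModule eventually _ _ SA)
              HSA (mkposreal _ e4)) as [N1 HN1].
  destruct (proj1 (@filterlim_locally_ball_norm C_AbsRing nat C_NormedModule eventually _ _ S)
              HS (mkposreal _ e2)) as [N2 HN2].
  exists (2 * max N1 N2)%nat. intros M HM.
  assert (HMd := Nat.div2_odd M). set (N := Nat.div2 M) in *.
  assert (HN : (max N1 N2 <= N)%nat) by (destruct (Nat.odd M); simpl in HMd; lia).
  specialize (HN1 N ltac:(lia)) as HAN. specialize (HN1 M ltac:(lia)) as HAM.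
  specialize (HN2 N ltac:(lia)) as HSN.
  unfold ball_norm in *; simpl in *.
  change (norm (minus (sum_n A N) SA)) with (Rabs (sum_n A N - SA)) in HAN.
  change (norm (minus (sum_n A M) SA)) with (Rabs (sum_n A M - SA)) in HAM.
  rewrite sum_n_Reals in HAN, HAM.
  change (Cmod (sum_n (fun n => csum (f n) n) N - S) < eps / 2) in HSN.
  change (Cmod (sum_n (fun m => csum (fun n => f n (m - n)%nat) m) M - S) < eps).
  rewrite sum_n_csum in *. fold (rows N) in HSN. fold (antidiags M).
  replace (antidiags M - S) with ((antidiags M - rows N) + (rows N - S)) by ring.
  eapply Rle_lt_trans; [apply Cmod_triangle |].
  pose proof (antidiags_sub_rows M) as Hd.
  fold N in Hd. apply Rabs_def2 in HAN, HAM. lra.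
Qed.

End TriangularSeries.

Lemma ex_series_Cmod_antidiags (f : nat -> nat -> C) (A : nat -> R) :
  (forall n k, (n < k)%nat -> f n k = 0) ->
  (forall n, sum_f_R0 (fun k => Cmod (f n k)) n <= A n) -> ex_series A ->
  ex_series (fun m => Cmod (csum (fun n => f n (m - n)%nat) m)).
Proof.
  intros Hup Hrow HA.
  destruct (is_series_rows_antidiags (fun n k => RtoC (Cmod (f n k))) A) as [S [_ HS]]; auto.
  - intros n k H. now rewrite Hup, Cmod_0.
  - intros n. eapply Rle_trans; [| apply (Hrow n)]. right. apply sum_eq. intros k _.
    rewrite Cmod_R. apply Rabs_right, Rle_ge, Cmod_ge_0.
  - apply is_series_C_iff in HS as [HS _].
    apply (@ex_series_le R_AbsRing R_CompleteNormedModule _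
             (fun m => Re (csum (fun n => RtoC (Cmod (f n (m - n)%nat))) m)));
      [| eexists; exact HS].
    intros m. change (norm (Cmod (csum (fun n => f n (m - n)%nat) m)))
      with (Rabs (Cmod (csum (fun n => f n (m - n)%nat) m))).
    rewrite Rabs_right by apply Rle_ge, Cmod_ge_0. rewrite csum_RtoC. apply Cmod_csum_le.
Qed.

(** * Growth of Pochhammer symbols and convergence of the Laguerre series *)

Lemma not_nonpos_int_linear_bound_lt (c : C) K : not_nonpos_int c ->
  exists d, 0 < d /\ forall i, (i < K)%nat -> d * (INR i + 1) <= Cmod (c + RtoC (INR i)).
Proof.
  intros Hc. induction K as [| K [d [Hd HK]]].
  - exists 1. split; [lra | intros; lia].
  - assert (HcK : 0 < Cmod (c + RtoC (INR K))) by apply Cmod_gt_0, Hc.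
    assert (HK1 : 0 < INR K + 1) by (pose proof (pos_INR K); lra).
    exists (Rmin d (Cmod (c + RtoC (INR K)) / (INR K + 1))). split.
    + apply Rmin_pos; [exact Hd | apply Rdiv_lt_0_compat; assumption].
    + intros i Hi. pose proof (pos_INR i). destruct (Nat.eq_dec i K) as [-> | Hne].
      * eapply Rle_trans; [apply Rmult_le_compat_r; [lra | apply Rmin_r] |].
        right. field. lra.
      * eapply Rle_trans; [| apply HK; lia]. apply Rmult_le_compat_r; [lra | apply Rmin_l].
Qed.

(* Beyond [i >= 2 |c| + 1] the bound [d (i + 1) <= |c + i|] holds with [d = 1/2]. *)
Lemma not_nonpos_int_linear_bound (c : C) : not_nonpos_int c ->
  exists d, 0 < d /\ forall i : nat, d * (INR i + 1) <= Cmod (c + RtoC (INR i)).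
Proof.
  intros Hc. destruct (INR_unbounded (2 * Cmod c + 1)) as [K HK].
  destruct (not_nonpos_int_linear_bound_lt c K Hc) as [d [Hd HdK]].
  exists (Rmin (1 / 2) d). split; [apply Rmin_pos; lra |].
  intros i. pose proof (pos_INR i). destruct (Nat.lt_ge_cases i K) as [HiK | HiK].
  - eapply Rle_trans; [| apply HdK; exact HiK]. apply Rmult_le_compat_r; [lra | apply Rmin_r].
  - eapply Rle_trans; [apply Rmult_le_compat_r; [lra | apply Rmin_l] |].
    assert (Htri := Cmod_triangle (c + RtoC (INR i)) (- c)).
    replace (c + RtoC (INR i) + - c) with (RtoC (INR i)) in Htri by ring.
    rewrite Cmod_R, Cmod_opp, Rabs_right in Htri by (apply Rle_ge, pos_INR).
    apply le_INR in HiK. lra.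
Qed.

Lemma Cmod_poch_ge (c : C) d : 0 < d ->
  (forall i : nat, d * (INR i + 1) <= Cmod (c + RtoC (INR i))) ->
  forall n, d ^ n * INR (fact n) <= Cmod (poch c n).
Proof.
  intros Hd Hc n. induction n; [simpl; rewrite Cmod_1; lra |].
  cbn [poch]. rewrite Cmod_mult, fact_simpl, mult_INR, S_INR. simpl pow.
  pose proof (pos_INR n). pose proof (INR_fact_pos n). pose proof (pow_le d n).
  apply Rle_trans with ((d ^ n * INR (fact n)) * (d * (INR n + 1)))%R; [right; ring |].
  apply Rmult_le_compat; [nra | nra | exact IHn | apply Hc].
Qed.

Lemma Cmod_add_INR_le (a : C) k : Cmod (a + RtoC (INR k)) <= (Cmod a + 1) * (INR k + 1).
Proof.
  eapply Rle_trans; [apply Cmod_triangle |]. rewrite Cmod_R, Rabs_right by apply Rle_ge, pos_INR.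
  pose proof (pos_INR k). pose proof (Cmod_ge_0 a). nra.
Qed.

Lemma Cmod_poch_le (c : C) n : Cmod (poch c n) <= (Cmod c + 1) ^ n * INR (fact n).
Proof.
  induction n; [simpl; rewrite Cmod_1; lra |].
  cbn [poch]. rewrite Cmod_mult, fact_simpl, mult_INR, S_INR. simpl pow.
  apply Rle_trans with (((Cmod c + 1) ^ n * INR (fact n)) * ((Cmod c + 1) * (INR n + 1)))%R;
    [| right; ring].
  apply Rmult_le_compat; [apply Cmod_ge_0 | apply Cmod_ge_0 | exact IHn | apply Cmod_add_INR_le].
Qed.

Lemma Cmod_cpow_m1 n : Cmod (cpow (-1) n) = 1%R.
Proof.
  assert (H := f_equal Cmod (cpow_m1_sqr n)). rewrite Cmod_mult, Cmod_1 in H.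
  pose proof (Cmod_ge_0 (cpow (-1) n)). nra.
Qed.

Lemma Cmod_poch_neg_nat n k : (k <= n)%nat ->
  Cmod (poch (- RtoC (INR n)) k) = (INR (fact n) / INR (fact (n - k)))%R.
Proof.
  intros H. pose proof (INR_fact_pos (n - k)).
  assert (E := f_equal Cmod (poch_neg_nat n k H)).
  rewrite !Cmod_mult, Cmod_cpow_m1, Rmult_1_l in E.
  unfold cfact in E. rewrite !Cmod_R, !Rabs_right in E by (apply Rle_ge, pos_INR).
  rewrite <- E. field. lra.
Qed.

Section LaguerreSeriesBound.

Variables (mu nu x : C) (dm dn : R).
Hypotheses (Hdm : 0 < dm) (Hdn : 0 < dn).
Hypothesis Hmu : forall i : nat, dm * (INR i + 1) <= Cmod (mu + RtoC (INR i)).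
Hypothesis Hnu : forall i : nat, dn * (INR i + 1) <= Cmod (nu + 1 + RtoC (INR i)).

Lemma Cmod_lag_coef_le n k : (k <= n)%nat ->
  Cmod (lag_coef nu n k) <= ((Cmod (nu + 1) + 1) ^ n * (Binomial.C n k / dn ^ k))%R.
Proof.
  intros Hk.
  pose proof (INR_fact_pos n). pose proof (INR_fact_pos k). pose proof (INR_fact_pos (n - k)).
  assert (Hdnk : 0 < dn ^ k * INR (fact k)) by (apply Rmult_lt_0_compat; [apply pow_lt |]; lra).
  assert (Hnuk := Cmod_poch_ge _ _ Hdn Hnu k).
  assert (Hnuk0 : poch (nu + 1) k <> 0) by (apply Cmod_gt_0; lra).
  unfold lag_coef. unfold Cdiv.
  rewrite !Cmod_mult, !Cmod_inv by (apply cfact_neq_0 || exact Hnuk0).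
  rewrite Cmod_poch_neg_nat by exact Hk. unfold cfact.
  rewrite !Cmod_R, !Rabs_right by apply Rle_ge, pos_INR.
  assert (Hdnk_pos : 0 < dn ^ k) by (apply pow_lt; lra).
  set (Fn := INR (fact n)) in *. set (Fk := INR (fact k)) in *.
  set (Fnk := INR (fact (n - k))) in *.
  apply Rmult_le_compat.
  - apply Rmult_le_pos; [apply Cmod_ge_0 | left; apply Rinv_0_lt_compat; lra].
  - unfold Rdiv. repeat apply Rmult_le_pos; try (left; apply Rinv_0_lt_compat); lra.
  - apply (Rmult_le_reg_r Fn); [lra |].
    rewrite Rmult_assoc, Rinv_l, Rmult_1_r by lra. apply Cmod_poch_le.
  - apply Rle_trans with (Fn / Fnk * / (dn ^ k * Fk) * / Fk)%R.
    + apply Rmult_le_compat_r; [left; apply Rinv_0_lt_compat; lra |].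
      apply Rmult_le_compat_l;
        [unfold Rdiv; apply Rmult_le_pos; [| left; apply Rinv_0_lt_compat]; lra |].
      apply Rinv_le_contravar; assumption.
    + (* drop the factor [1/k! <= 1] *)
      assert (Hk1 : 1 <= Fk) by (apply (le_INR 1), lt_O_fact).
      unfold Binomial.C. fold Fn Fk Fnk.
      apply Rle_trans with (Fn / (Fk * Fnk) / dn ^ k * / Fk)%R; [right; field; lra |].
      rewrite <- (Rmult_1_r (Fn / (Fk * Fnk) / dn ^ k)) at 2.
      apply Rmult_le_compat_l.
      * unfold Rdiv. repeat apply Rmult_le_pos; try (left; apply Rinv_0_lt_compat); nra.
      * rewrite <- Rinv_1. apply Rinv_le_contravar; lra.
Qed.

Lemma Cmod_lag_series_term_le n k : (k <= n)%nat ->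
  Cmod (lag_series_coef mu nu n k * cpow x (n + k)) <=
  ((Cmod x * (Cmod (nu + 1) + 1) / dm) ^ n / INR (fact n) * (Binomial.C n k * (Cmod x / dn) ^ k))%R.
Proof.
  intros Hk.
  pose proof (INR_fact_pos n). pose proof (pow_lt dm n Hdm). pose proof (pow_lt dn k Hdn).
  assert (Hmun := Cmod_poch_ge _ _ Hdm Hmu n).
  assert (Hmun0 : poch mu n <> 0) by (apply Cmod_gt_0; nra).
  unfold lag_series_coef, Cdiv.
  rewrite !Cmod_mult, Cmod_inv, Cmod_cpow_m1, !Cmod_cpow, pow_add by exact Hmun0.
  pose proof (Cmod_lag_coef_le n k Hk) as Hlag.
  pose proof (Cmod_ge_0 x). pose proof (pow_le (Cmod x) n H2). pose proof (pow_le (Cmod x) k H2).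
  pose proof (Cmod_ge_0 (lag_coef nu n k)).
  apply Rle_trans with (/ (dm ^ n * INR (fact n)) *
    ((Cmod (nu + 1) + 1) ^ n * (Binomial.C n k / dn ^ k)) * (Cmod x ^ n * Cmod x ^ k))%R.
  - rewrite Rmult_1_l. apply Rmult_le_compat_r; [nra |].
    apply Rmult_le_compat; [left; apply Rinv_0_lt_compat; nra | exact H5 | | exact Hlag].
    apply Rinv_le_contravar; [nra | exact Hmun].
  - right. unfold Rdiv. rewrite !Rpow_mult_distr, !pow_inv. field. lra.
Qed.

Lemma lag_series_row_le n :
  sum_f_R0 (fun k => Cmod (lag_series_coef mu nu n k * cpow x (n + k))) n <=
  ((Cmod x * (Cmod (nu + 1) + 1) * (Cmod x / dn + 1) / dm) ^ n / INR (fact n))%R.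
Proof.
  eapply Rle_trans; [apply sum_Rle; intros k Hk; exact (Cmod_lag_series_term_le n k Hk) |].
  rewrite (sum_eq _ (fun k => (Binomial.C n k * (Cmod x / dn) ^ k) *
                     ((Cmod x * (Cmod (nu + 1) + 1) / dm) ^ n / INR (fact n)))%R) by (intros; ring).
  rewrite <- scal_sum.
  replace (sum_f_R0 (fun k => (Binomial.C n k * (Cmod x / dn) ^ k)%R) n)
    with ((Cmod x / dn + 1) ^ n)%R.
  - right. unfold Rdiv. rewrite !Rpow_mult_distr, !pow_inv. ring.
  - rewrite binomial. apply sum_eq. intros. rewrite pow1. ring.
Qed.

End LaguerreSeriesBound.

Lemma laguerre_series_termE mu nu x n :
  cpow (- x) n / poch mu n * laguerre n nu x =
  csum (fun k => lag_series_coef mu nu n k * cpow x (n + k)) n.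
Proof.
  unfold laguerre. rewrite <- !csum_scal. apply csum_ext. intros k.
  unfold lag_series_coef, lag_coef. rewrite cpow_add.
  replace (- x) with (-1 * x) by ring. rewrite cpow_mult. unfold Cdiv. ring.
Qed.

Lemma is_series_exp_mul_laguerre_series mu nu x :
  not_nonpos_int mu -> not_nonpos_int (nu + 1) ->
  exists S, is_series (fun n => cpow (- x) n / poch mu n * laguerre n nu x) S /\
            is_series (fun m => exp_lag_series_coef mu nu m * cpow x m) (cexp (- x) * S).
Proof.
  intros Hmu Hnu.
  destruct (not_nonpos_int_linear_bound mu Hmu) as [dm [Hdm Hm]].
  destruct (not_nonpos_int_linear_bound (nu + 1) Hnu) as [dn [Hdn Hn]].
  set (f n k := lag_series_coef mu nu n k * cpow x (n + k)).
  set (q := (Cmod x * (Cmod (nu + 1) + 1) * (Cmod x / dn + 1) / dm)%R).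
  assert (Hq : ex_series (fun n => (q ^ n / INR (fact n))%R))
    by (exists (exp q); apply exp_series_R).
  assert (Hup : forall n k, (n < k)%nat -> f n k = 0).
  { intros n k H. unfold f, lag_series_coef, lag_coef. rewrite poch_neg_nat_eq_0 by exact H.
    unfold Cdiv. ring. }
  assert (Hrow := lag_series_row_le mu nu x dm dn Hdm Hdn Hm Hn).
  destruct (is_series_rows_antidiags f _ Hup Hrow Hq) as [S [Hrows Hdiags]].
  exists S. split.
  - eapply is_series_ext; [| exact Hrows]. intros n. symmetry. apply laguerre_series_termE.
  - eapply is_series_ext;
      [| exact (is_series_C_mult _ _ _ _ (is_series_cexp (- x)) Hdiags
                  (ex_series_Cmod_exp_term _) (ex_series_Cmod_antidiags f _ Hup Hrow Hq))].
    intros m. rewrite <- exp_lag_series_coefE by assumption.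
    rewrite Cmult_comm, <- csum_scal. apply csum_ext_le. intros j Hj.
    unfold f. rewrite <- !csum_scal. apply csum_ext_le. intros n Hn0.
    replace (n + (m - j - n))%nat with (m - j)%nat by lia.
    unfold exp_term. replace (- x) with (-1 * x) by ring. rewrite cpow_mult.
    replace (cpow x m) with (cpow x j * cpow x (m - j)) by (rewrite <- cpow_add; f_equal; lia).
    unfold Cdiv. ring.
Qed.

(** * The 3F3 series *)

Lemma ex_series_ratio_le_div (t : nat -> C) (M : R) : 0 <= M ->
  (forall k, Cmod (t (S k)) <= M / (INR k + 1) * Cmod (t k)) -> ex_series t.
Proof.
  intros HM Ht.
  assert (Hbound : forall k, Cmod (t k) <= Cmod (t O) * (M ^ k / INR (fact k))).
  { induction k; [simpl; rewrite Rdiv_1_r; lra |].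
    eapply Rle_trans; [apply Ht |]. rewrite fact_simpl, mult_INR, S_INR. simpl pow.
    pose proof (INR_fact_pos k). pose proof (pos_INR k).
    apply Rle_trans with (M / (INR k + 1) * (Cmod (t O) * (M ^ k / INR (fact k))))%R.
    - apply Rmult_le_compat_l; [| exact IHk].
      apply Rmult_le_pos; [exact HM | left; apply Rinv_0_lt_compat; lra].
    - right. field. lra. }
  apply (@ex_series_le C_AbsRing C_CompleteNormedModule _ _ Hbound).
  exists (Cmod (t O) * exp M)%R. apply (is_series_scal (Cmod (t O)) _ _ (exp_series_R M)).
Qed.

Lemma Cmod_shifted_ratio_le (a b : C) d k : 0 < d ->
  d * (INR k + 1) <= Cmod (b + RtoC (INR k)) ->
  Cmod ((a + RtoC (INR k)) / (b + RtoC (INR k))) <= (Cmod a + 1) / d.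
Proof.
  intros Hd Hb. pose proof (pos_INR k). pose proof (Cmod_add_INR_le a k).
  assert (Hb0 : 0 < Cmod (b + RtoC (INR k))) by nra.
  rewrite Cmod_div by (apply Cmod_gt_0; exact Hb0).
  apply Rle_trans with ((Cmod a + 1) * (INR k + 1) / (d * (INR k + 1)))%R.
  - unfold Rdiv.
    apply Rmult_le_compat; [apply Cmod_ge_0 | left; apply Rinv_0_lt_compat; lra | lra |].
    apply Rinv_le_contravar; nra.
  - right. field. lra.
Qed.

Lemma F33_term_S a1 a2 a3 b1 b2 b3 z k :
  not_nonpos_int b1 -> not_nonpos_int b2 -> not_nonpos_int b3 ->
  F33_term a1 a2 a3 b1 b2 b3 z (S k) = F33_term a1 a2 a3 b1 b2 b3 z k *
    ((a1 + RtoC (INR k)) / (b1 + RtoC (INR k)) * ((a2 + RtoC (INR k)) / (b2 + RtoC (INR k))) *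
     ((a3 + RtoC (INR k)) / (b3 + RtoC (INR k))) * z / (RtoC (INR k) + 1)).
Proof.
  intros H1 H2 H3. unfold F33_term. cbn [poch cpow]. rewrite cfact_S.
  pose proof (poch_neq_0 b1 k H1). pose proof (poch_neq_0 b2 k H2). pose proof (poch_neq_0 b3 k H3).
  pose proof (cfact_neq_0 k). pose proof (INR_S_C_neq_0 k).
  field. repeat split; auto.
Qed.

Lemma ex_series_F33 a1 a2 a3 b1 b2 b3 z :
  not_nonpos_int b1 -> not_nonpos_int b2 -> not_nonpos_int b3 ->
  ex_series (F33_term a1 a2 a3 b1 b2 b3 z).
Proof.
  intros H1 H2 H3.
  destruct (not_nonpos_int_linear_bound b1 H1) as [d1 [D1 E1]].
  destruct (not_nonpos_int_linear_bound b2 H2) as [d2 [D2 E2]].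
  destruct (not_nonpos_int_linear_bound b3 H3) as [d3 [D3 E3]].
  assert (Hr : forall (a : C) d, 0 < d -> 0 <= (Cmod a + 1) / d).
  { intros a d Hd. pose proof (Cmod_ge_0 a). unfold Rdiv.
    apply Rmult_le_pos; [lra | left; apply Rinv_0_lt_compat; exact Hd]. }
  pose proof (Hr a1 d1 D1). pose proof (Hr a2 d2 D2). pose proof (Hr a3 d3 D3).
  set (r1 := ((Cmod a1 + 1) / d1)%R) in *. set (r2 := ((Cmod a2 + 1) / d2)%R) in *.
  set (r3 := ((Cmod a3 + 1) / d3)%R) in *.
  pose proof (Cmod_ge_0 z).
  apply (ex_series_ratio_le_div _ (r1 * r2 * r3 * Cmod z));
    [apply Rmult_le_pos; [apply Rmult_le_pos; [apply Rmult_le_pos |] |]; assumption |].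
  intros k. rewrite F33_term_S by assumption. rewrite Cmod_mult, Rmult_comm.
  apply Rmult_le_compat_r; [apply Cmod_ge_0 |].
  pose proof (pos_INR k). pose proof (INR_S_C_neq_0 k).
  rewrite Cmod_div by assumption.
  replace (RtoC (INR k) + 1) with (RtoC (INR k + 1)) by now rewrite RtoC_plus.
  rewrite Cmod_R, Rabs_right by lra.
  apply Rmult_le_compat_r; [left; apply Rinv_0_lt_compat; lra |].
  rewrite Cmod_mult. apply Rmult_le_compat_r; [apply Cmod_ge_0 |].
  rewrite !Cmod_mult.
  pose proof (Cmod_shifted_ratio_le a1 b1 d1 k D1 (E1 k)).
  pose proof (Cmod_shifted_ratio_le a2 b2 d2 k D2 (E2 k)).
  pose proof (Cmod_shifted_ratio_le a3 b3 d3 k D3 (E3 k)).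
  repeat apply Rmult_le_compat; try apply Cmod_ge_0; try apply Rmult_le_pos; try apply Cmod_ge_0;
    assumption.
Qed.

(* The term of the 3F3 with numerator parameters [(a+1)/2, a/2] and argument [-4x], simplified
   by the duplication formula [(a)_{2k} = 4^k (a/2)_k ((a+1)/2)_k] and by
   [(nu+3)_k / (nu+2)_k = (nu+2+k) / (nu+2)]. *)
Definition reduced_F33_term (nu a b x : C) (k : nat) : C :=
  cpow (-1) k * ((nu + 2 + RtoC (INR k)) / (nu + 2)) * poch (a + RtoC (INR k)) k /
  (poch b k * cfact k) * cpow x k.

Lemma poch_double a k : cpow 4 k * poch (a / 2) k * poch ((a + 1) / 2) k = poch a (2 * k).
Proof.
  induction k; [simpl; ring |].
  replace (2 * S k)%nat with (S (S (2 * k))) by lia.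
  cbn [poch cpow]. rewrite <- IHk, S_INR, mult_INR, RtoC_plus, RtoC_mult.
  replace (RtoC (INR 2)) with (2 : C) by (simpl; f_equal; ring).
  field.
Qed.

Lemma F33_term_swap23 a1 a2 a3 b1 b2 b3 z k :
  F33_term a1 a2 a3 b1 b2 b3 z k = F33_term a1 a3 a2 b1 b2 b3 z k.
Proof. unfold F33_term, Cdiv. ring. Qed.

Lemma F33_term_reduce nu a b x k :
  not_nonpos_int (nu + 2) -> not_nonpos_int b -> not_nonpos_int a ->
  F33_term (nu + 3) ((a + 1) / 2) (a / 2) (nu + 2) b a (- (4) * x) k = reduced_F33_term nu a b x k.
Proof.
  intros Hnu Hb Ha. unfold F33_term, reduced_F33_term.
  assert (Hnu3 : poch (nu + 3) k * (nu + 2) = poch (nu + 2) k * (nu + 2 + RtoC (INR k))).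
  { assert (E := poch_Sl (nu + 2) k). cbn [poch] in E.
    replace (nu + 2 + 1) with (nu + 3) in E by ring. rewrite E. ring. }
  assert (Hdouble := poch_double a k).
  replace (2 * k)%nat with (k + k)%nat in Hdouble by lia. rewrite poch_add in Hdouble.
  replace (- (4) * x) with (-1 * 4 * x) by ring. rewrite !cpow_mult.
  pose proof (not_nonpos_int_neq_0 _ Hnu).
  pose proof (poch_neq_0 _ k Hnu). pose proof (poch_neq_0 _ k Hb). pose proof (poch_neq_0 _ k Ha).
  pose proof (cfact_neq_0 k). assert (cpow 4 k <> 0) by (apply cpow_neq_0, RtoC_neq_0; lra).
  transitivity ((cpow 4 k * poch (a / 2) k * poch ((a + 1) / 2) k) *
     (poch (nu + 3) k * cpow (-1) k * cpow x k /
      (poch (nu + 2) k * poch b k * poch a k * cfact k)));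
    [field; repeat split; auto |].
  rewrite Hdouble.
  replace (poch (nu + 3) k) with (poch (nu + 2) k * (nu + 2 + RtoC (INR k)) / (nu + 2))
    by (rewrite <- Hnu3; field; auto).
  field. repeat split; auto.
Qed.

(** * Matching the coefficients of both sides *)

Definition shift (f : nat -> C) (m : nat) : C := match m with O => 0 | S m' => f m' end.

Lemma is_series_shift (a : nat -> C) l : is_series a l -> is_series (shift a) l.
Proof.
  intros H. apply is_series_decr_1.
  match goal with
  | |- is_series _ ?L => replace L with l by (destruct l; apply C_eq; simpl; ring)
  end.
  exact H.
Qed.

Definition lhs_coef (mu nu x : C) (m : nat) : C :=
  exp_lag_series_coef mu nu m * cpow x m -
  x / (nu + 2) * shift (fun m => exp_lag_series_coef mu (nu + 1) m * cpow x m) m.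

Lemma poch_diag_SS (s : C) n :
  let Q := poch (s + 3 + RtoC (INR n)) n in
  poch (s + RtoC (INR (S (S n)))) (S (S n)) =
    (s + RtoC (INR n) + 2) * Q * (s + 2 * RtoC (INR n) + 3) /\
  poch (s + 1 + RtoC (INR (S n))) (S n) = (s + RtoC (INR n) + 2) * Q /\
  poch (s + 1 + RtoC (INR (S (S n)))) (S (S n)) =
    Q * (s + 2 * RtoC (INR n) + 3) * (s + 2 * RtoC (INR n) + 4) /\
  poch (s + 2 + RtoC (INR (S n))) (S n) = Q * (s + 2 * RtoC (INR n) + 3).
Proof.
  intros Q.
  assert (I1 : RtoC (INR (S n)) = RtoC (INR n) + 1) by apply INR_S_C.
  assert (I2 : RtoC (INR (S (S n))) = RtoC (INR n) + 2) by (rewrite !INR_S_C; ring).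
  split; [| split; [| split]].
  - rewrite poch_Sl. cbn [poch].
    replace (s + RtoC (INR (S (S n))) + 1) with (s + 3 + RtoC (INR n)) by (rewrite I2; ring).
    fold Q. rewrite I2. ring.
  - rewrite poch_Sl.
    replace (s + 1 + RtoC (INR (S n)) + 1) with (s + 3 + RtoC (INR n)) by (rewrite I1; ring).
    fold Q. rewrite I1. ring.
  - replace (s + 1 + RtoC (INR (S (S n)))) with (s + 3 + RtoC (INR n)) by (rewrite I2; ring).
    cbn [poch]. fold Q. rewrite I1. ring.
  - replace (s + 2 + RtoC (INR (S n))) with (s + 3 + RtoC (INR n)) by (rewrite I1; ring).
    cbn [poch]. fold Q. ring.
Qed.

Lemma poch_tail_SS (mu : C) n : mu <> 0 -> mu + 1 <> 0 ->
  poch mu (S (S n)) = poch mu n * (mu + RtoC (INR n)) * (mu + RtoC (INR n) + 1) /\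
  poch (mu + 1) (S n) = poch mu n * (mu + RtoC (INR n)) * (mu + RtoC (INR n) + 1) / mu /\
  poch (mu + 2) n =
    poch mu n * (mu + RtoC (INR n)) * (mu + RtoC (INR n) + 1) / (mu * (mu + 1)).
Proof.
  intros Hmu Hmu1.
  assert (E : poch mu (S (S n)) = poch mu n * (mu + RtoC (INR n)) * (mu + RtoC (INR n) + 1))
    by (cbn [poch]; rewrite INR_S_C; ring).
  rewrite <- E. rewrite (poch_Sl mu (S n)), (poch_Sl (mu + 1) n).
  replace (mu + 1 + 1) with (mu + 2) by ring.
  repeat split; field; auto.
Qed.

Lemma lhs_coef_SS mu nu x n :
  not_nonpos_int mu -> not_nonpos_int (nu + 1) ->
  lhs_coef mu nu x (S (S n)) =
  reduced_F33_term nu (mu + nu + 1) mu x (S (S n)) +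
  2 * x / mu * reduced_F33_term nu (mu + nu + 2) (mu + 1) x (S n) +
  cpow x 2 / (mu * (mu + 1)) * reduced_F33_term nu (mu + nu + 3) (mu + 2) x n.
Proof.
  intros Hmu Hnu. unfold lhs_coef, exp_lag_series_coef, reduced_F33_term, shift.
  pose proof (not_nonpos_int_neq_0 _ Hmu) as Hmu0.
  pose proof (not_nonpos_int_neq_0 _ (not_nonpos_int_S _ Hmu)) as Hmu1.
  replace (mu + (nu + 1)) with (mu + nu + 1) by ring.
  destruct (poch_diag_SS (mu + nu) n) as (A1 & A2 & A3 & A4).
  destruct (poch_tail_SS mu n Hmu0 Hmu1) as (B1 & B2 & B3).
  rewrite A1, A2, A3, A4, B1, B2, B3, !cfact_S, !INR_S_C. cbn [poch cpow].
  pose proof (poch_neq_0 mu n Hmu). pose proof (cfact_neq_0 n).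
  pose proof (INR_S_C_neq_0 n). pose proof (INR_S_C_neq_0 (S n)) as Hn2. rewrite INR_S_C in Hn2.
  pose proof (Hmu n).
  assert (mu + RtoC (INR n) + 1 <> 0).
  { replace (mu + RtoC (INR n) + 1) with (mu + RtoC (INR (S n))) by (rewrite INR_S_C; ring).
    apply Hmu. }
  assert (nu + 2 <> 0).
  { replace (nu + 2) with (nu + 1 + 1) by ring. apply not_nonpos_int_neq_0, not_nonpos_int_S, Hnu. }
  field. repeat split; auto.
Qed.

Lemma lhs_coefE mu nu x m :
  not_nonpos_int mu -> not_nonpos_int (nu + 1) ->
  lhs_coef mu nu x m =
  reduced_F33_term nu (mu + nu + 1) mu x m +
  2 * x / mu * shift (reduced_F33_term nu (mu + nu + 2) (mu + 1) x) m +
  cpow x 2 / (mu * (mu + 1)) * shift (shift (reduced_F33_term nu (mu + nu + 3) (mu + 2) x)) m.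
Proof.
  intros Hmu Hnu.
  pose proof (not_nonpos_int_neq_0 _ Hmu).
  pose proof (not_nonpos_int_neq_0 _ (not_nonpos_int_S _ Hmu)).
  assert (nu + 2 <> 0).
  { replace (nu + 2) with (nu + 1 + 1) by ring. apply not_nonpos_int_neq_0, not_nonpos_int_S, Hnu. }
  destruct m as [| [| n]]; [| | apply lhs_coef_SS; assumption];
    unfold lhs_coef, exp_lag_series_coef, reduced_F33_term, shift; cbn [poch cpow];
    unfold cfact; simpl; field; repeat split; auto.
Qed.

Lemma is_series_lhs mu nu x : not_nonpos_int mu -> not_nonpos_int (nu + 1) ->
  exists S,
    is_series (fun n => cpow (- x) n / poch mu n *
                 (laguerre n nu x - x / (nu + 2) * laguerre n (nu + 1) x)) S /\
    is_series (lhs_coef mu nu x) (cexp (- x) * S).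
Proof.
  intros Hmu Hnu.
  destruct (is_series_exp_mul_laguerre_series mu nu x Hmu Hnu) as [S1 [HS1 HT1]].
  destruct (is_series_exp_mul_laguerre_series mu (nu + 1) x Hmu (not_nonpos_int_S _ Hnu))
    as [S2 [HS2 HT2]].
  exists (S1 - x / (nu + 2) * S2). split.
  - eapply is_series_ext;
      [| exact (is_series_minus _ _ _ _ HS1 (is_series_scal (x / (nu + 2)) _ _ HS2))].
    intros n. cbv beta. change (plus ?u (opp ?v)) with (u - v). change (scal ?u ?v) with (u * v).
    match goal with |- ?A = ?B => change (@eq C A B) end. ring.
  - replace (cexp (- x) * (S1 - x / (nu + 2) * S2))
      with (cexp (- x) * S1 - x / (nu + 2) * (cexp (- x) * S2)) by ring.
    exact (is_series_minus _ _ _ _ HT1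
             (is_series_scal (x / (nu + 2)) _ _ (is_series_shift _ _ HT2))).
Qed.

Lemma is_series_rhs mu nu x :
  not_nonpos_int mu -> not_nonpos_int (nu + 1) -> not_nonpos_int (mu + nu + 1) ->
  let h := mu / 2 + nu / 2 in
  exists F1 F2 F3,
    is_series (F33_term (nu + 3) (h + 1) (h + /2) (nu + 2) mu (mu + nu + 1) (-(4) * x)) F1 /\
    is_series (F33_term (nu + 3) (h + 1) (h + 3/2) (nu + 2) (mu + 1) (mu + nu + 2) (-(4) * x)) F2 /\
    is_series (F33_term (nu + 3) (h + 2) (h + 3/2) (nu + 2) (mu + 2) (mu + nu + 3) (-(4) * x)) F3 /\
    is_series (lhs_coef mu nu x) (F1 + 2 * x / mu * F2 + cpow x 2 / (mu * (mu + 1)) * F3).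
Proof.
  intros Hmu Hnu Hmunu h.
  pose proof (not_nonpos_int_S _ Hmu) as Hmu1. pose proof (not_nonpos_int_SS _ Hmu) as Hmu2.
  assert (Hnu2 : not_nonpos_int (nu + 2))
    by (replace (nu + 2) with (nu + 1 + 1) by ring; now apply not_nonpos_int_S).
  assert (Hmunu2 : not_nonpos_int (mu + nu + 2))
    by (replace (mu + nu + 2) with (mu + nu + 1 + 1) by ring; now apply not_nonpos_int_S).
  assert (Hmunu3 : not_nonpos_int (mu + nu + 3))
    by (replace (mu + nu + 3) with (mu + nu + 1 + 2) by ring; now apply not_nonpos_int_SS).
  assert (Two : (2 : C) <> 0) by (apply RtoC_neq_0; lra).
  destruct (ex_series_F33 (nu + 3) ((mu + nu + 1 + 1) / 2) ((mu + nu + 1) / 2) (nu + 2) mu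
              (mu + nu + 1) (-(4) * x)) as [F1 H1]; try assumption.
  destruct (ex_series_F33 (nu + 3) ((mu + nu + 2 + 1) / 2) ((mu + nu + 2) / 2) (nu + 2) (mu + 1)
              (mu + nu + 2) (-(4) * x)) as [F2 H2]; try assumption.
  destruct (ex_series_F33 (nu + 3) ((mu + nu + 3 + 1) / 2) ((mu + nu + 3) / 2) (nu + 2) (mu + 2)
              (mu + nu + 3) (-(4) * x)) as [F3 H3]; try assumption.
  assert (G1 := is_series_ext _ _ _ (fun k => F33_term_reduce _ _ _ x k Hnu2 Hmu Hmunu) H1).
  assert (G2 := is_series_ext _ _ _ (fun k => F33_term_reduce _ _ _ x k Hnu2 Hmu1 Hmunu2) H2).
  assert (G3 := is_series_ext _ _ _ (fun k => F33_term_reduce _ _ _ x k Hnu2 Hmu2 Hmunu3) H3).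
  exists F1, F2, F3. split; [| split; [| split]].
  - replace (h + 1) with ((mu + nu + 1 + 1) / 2) by (unfold h; field).
    replace (h + /2) with ((mu + nu + 1) / 2) by (unfold h; field). exact H1.
  - eapply is_series_ext; [intros k; apply F33_term_swap23 |].
    replace (h + 3/2) with ((mu + nu + 2 + 1) / 2) by (unfold h; field).
    replace (h + 1) with ((mu + nu + 2) / 2) by (unfold h; field). exact H2.
  - replace (h + 2) with ((mu + nu + 3 + 1) / 2) by (unfold h; field).
    replace (h + 3/2) with ((mu + nu + 3) / 2) by (unfold h; field). exact H3.
  - eapply is_series_ext; [intros m; symmetry; apply lhs_coefE; assumption |].
    exact (is_series_plus _ _ _ _
             (is_series_plus _ _ _ _ G1 (is_series_scal (2 * x / mu) _ _ (is_series_shift _ _ G2)))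
             (is_series_scal (cpow x 2 / (mu * (mu + 1))) _ _
                (is_series_shift _ _ (is_series_shift _ _ G3)))).
Qed.

Theorem mainTheorem10 (nu mu x : C)
  (Hmu : forall k : nat, mu + RtoC (INR k) <> 0)
  (Hnu : forall k : nat, nu + 1 + RtoC (INR k) <> 0)
  (Hmunu : forall k : nat, mu + nu + 1 + RtoC (INR k) <> 0) :
  let h := mu / 2 + nu / 2 in
  exists S F1 F2 F3 : C,
    is_series (fun n => cpow (- x) n / poch mu n *
                 (laguerre n nu x - x / (nu + 2) * laguerre n (nu + 1) x)) S /\
    is_series (F33_term (nu + 3) (h + 1) (h + /2) (nu + 2) mu (mu + nu + 1) (-(4) * x)) F1 /\
    is_series (F33_term (nu + 3) (h + 1) (h + 3/2) (nu + 2) (mu + 1) (mu + nu + 2) (-(4) * x)) F2 /\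
    is_series (F33_term (nu + 3) (h + 2) (h + 3/2) (nu + 2) (mu + 2) (mu + nu + 3) (-(4) * x)) F3 /\
    cexp (- x) * S = F1 + 2 * x / mu * F2 + cpow x 2 / (mu * (mu + 1)) * F3.
Proof.
  intros h.
  destruct (is_series_lhs mu nu x Hmu Hnu) as [S [HS Hlag]].
  destruct (is_series_rhs mu nu x Hmu Hnu Hmunu) as (F1 & F2 & F3 & H1 & H2 & H3 & HF33).
  exists S, F1, F2, F3.
  repeat split; try assumption.
  exact (is_series_C_unique _ _ _ Hlag HF33).
Qed.
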